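(* Let $G$ be a $g$-barrelled convergence group and $L$ a Hausdorff locally quasi-convex topological group. Then every compact subset of $\Gamma_s(G,L)$ is equicontinuous.
   Context: All groups are abelian. A convergence structure on a set $X$ assigns to each $x$ a collection of filters converging to $x$. This assignment must satisfy three conditions: point ultrafilters converge to their point; finite intersections of filters converging to $x$ converge to $x$; and finer filters of convergent filters converge. Continuity means convergent filters go to convergent filters. A convergence group is an abelian group with a convergence structure such that $\mathcal F\to x$, $\mathcal G\to y$ imply $\mathcal F-\mathcal G\to x-y$. Every topological group is a convergence group, with convergent filters being those finer than the neighbourhood filter. $\mathbb T=\mathbb R/\mathbb Z$, $\mathbb T_+=\rho([-1/4,1/4])$ where $\rho:\mathbb R\to\mathbb T$ is the quotient map. For convergence groups $G,L$, $\Gamma(G,L)$ is the group of continuous homomorphisms, and $\Gamma_s(G,L)$ is $\Gamma(G,L)$ with the topology of pointwise convergence. $\Gamma_s G=\Gamma_s(G,\mathbb T)$. A set $M\subseteq\Gamma(G,L)$ is equicontinuous if for every filter $\mathcal F\to0$ in $G$, the filter generated by $\{\varphi(x):\varphi\in M,x\in F\}$, $F\in\mathcal F$, converges to $0$ in $L$. A convergence group $G$ is $g$-barrelled if every compact subset of $\Gamma_s G$ is equicontinuous. A subset $A$ of a topological group $L$ is quasi-convex if for every $x\notin A$ there is a continuous character $\varphi$ with $\varphi(A)\subseteq\mathbb T_+$ and $\varphi(x)\notin\mathbb T_+$. $L$ is locally quasi-convex if it has a zero neighbourhood base of quasi-convex sets. *)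

From Stdlib Require Import Reals ZArith.
Open Scope R_scope.

(** * Filters (not required to be proper; the improper filter converges everywhere) *)
Definition is_filter {X : Type} (F : (X -> Prop) -> Prop) : Prop :=
  F (fun _ => True) /\
  (forall A B : X -> Prop, F A -> (forall x, A x -> B x) -> F B) /\
  (forall A B : X -> Prop, F A -> F B -> F (fun x => A x /\ B x)).

Definition is_ultrafilter {X : Type} (F : (X -> Prop) -> Prop) : Prop :=
  is_filter F /\ ~ F (fun _ => False) /\
  (forall A : X -> Prop, F A \/ F (fun x => ~ A x)).

Definition point_filter {X : Type} (x : X) : (X -> Prop) -> Prop := fun A => A x.
Definition filter_inter {X : Type} (F H : (X -> Prop) -> Prop) : (X -> Prop) -> Prop :=
  fun A => F A /\ H A.
Definition filter_image {X Y : Type} (f : X -> Y) (F : (X -> Prop) -> Prop)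
  : (Y -> Prop) -> Prop := fun S => F (fun a => S (f a)).

Record GrpConv := {
  gc_car :> Type;
  gc_zero : gc_car;
  gc_add : gc_car -> gc_car -> gc_car;
  gc_opp : gc_car -> gc_car;
  gc_conv : ((gc_car -> Prop) -> Prop) -> gc_car -> Prop
}.

Definition gc_sub (G : GrpConv) (x y : G) : G := gc_add G x (gc_opp G y).

Definition is_abgroup (G : GrpConv) : Prop :=
  (forall x y z : G, gc_add G x (gc_add G y z) = gc_add G (gc_add G x y) z) /\
  (forall x y : G, gc_add G x y = gc_add G y x) /\
  (forall x : G, gc_add G (gc_zero G) x = x) /\
  (forall x : G, gc_add G (gc_opp G x) x = gc_zero G).

Definition is_convergence (G : GrpConv) : Prop :=
  (forall F x, gc_conv G F x -> is_filter F) /\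
  (forall x : G, gc_conv G (point_filter x) x) /\
  (forall F H (x : G), gc_conv G F x -> gc_conv G H x -> gc_conv G (filter_inter F H) x) /\
  (forall F H (x : G), is_filter H -> (forall A, F A -> H A) ->
       gc_conv G F x -> gc_conv G H x).

Definition filter_sub (G : GrpConv) (F H : (G -> Prop) -> Prop) : (G -> Prop) -> Prop :=
  fun S => exists A B, F A /\ H B /\ (forall a b, A a -> B b -> S (gc_sub G a b)).

Definition is_conv_group (G : GrpConv) : Prop :=
  is_abgroup G /\ is_convergence G /\
  (forall F H (x y : G), gc_conv G F x -> gc_conv G H y ->
      gc_conv G (filter_sub G F H) (gc_sub G x y)).

Definition is_topology {X : Type} (opn : (X -> Prop) -> Prop) : Prop :=
  opn (fun _ => True) /\
  (forall (I : Type) (U : I -> X -> Prop), (forall i, opn (U i)) ->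
       opn (fun x => exists i, U i x)) /\
  (forall U V, opn U -> opn V -> opn (fun x => U x /\ V x)).

(** L is a topological group with topology [opn]: L is a convergence group whose
    convergent filters are exactly the filters finer than the neighbourhood filter. *)
Definition is_top_group (L : GrpConv) (opn : (L -> Prop) -> Prop) : Prop :=
  is_conv_group L /\ is_topology opn /\
  (forall F (x : L), is_filter F ->
     (gc_conv L F x <-> (forall U, opn U -> U x -> F U))).

Definition hausdorff {X : Type} (opn : (X -> Prop) -> Prop) : Prop :=
  forall x y : X, x <> y -> exists U V, opn U /\ opn V /\ U x /\ V y /\
     (forall z, U z -> V z -> False).

Definition is_hom (G L : GrpConv) (f : G -> L) : Prop :=
  forall x y : G, f (gc_add G x y) = gc_add L (f x) (f y).

Definition continuous (G L : GrpConv) (f : G -> L) : Prop :=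
  forall F (x : G), gc_conv G F x -> gc_conv L (filter_image f F) (f x).

Definition Gamma (G L : GrpConv) (f : G -> L) : Prop := is_hom G L f /\ continuous G L f.

(** pointwise convergence on functions G -> L (the convergence of Gamma_s(G,L)) *)
Definition pointwise_conv (G L : GrpConv) (Phi : ((G -> L) -> Prop) -> Prop) (f : G -> L)
  : Prop := forall x : G, gc_conv L (filter_image (fun g : G -> L => g x) Phi) (f x).

(** M is a compact subset of Gamma_s(G,L): every ultrafilter containing M
    converges pointwise to an element of M. *)
Definition compact_s (G L : GrpConv) (M : (G -> L) -> Prop) : Prop :=
  (forall f, M f -> Gamma G L f) /\
  (forall Phi, is_ultrafilter Phi -> Phi M ->
     exists f, M f /\ pointwise_conv G L Phi f).

Definition equicontinuous (G L : GrpConv) (M : (G -> L) -> Prop) : Prop :=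
  forall F, gc_conv G F (gc_zero G) ->
    gc_conv L (fun S => exists A, F A /\ forall f x, M f -> A x -> S (f x)) (gc_zero L).

(** * The circle group T = R/Z, represented by [0,1) *)
Definition Tcar : Type := { r : R | 0 <= r < 1 }.

Lemma frac_part_range (r : R) : 0 <= frac_part r < 1.
Proof. destruct (base_fp r) as [H1 H2]. split; [apply Rge_le; exact H1 | exact H2]. Qed.

Definition rho (r : R) : Tcar := exist _ (frac_part r) (frac_part_range r).

Definition Tval (t : Tcar) : R := proj1_sig t.

Definition T_conv (F : (Tcar -> Prop) -> Prop) (t : Tcar) : Prop :=
  is_filter F /\
  forall eps : R, eps > 0 ->
    F (fun s => exists k : Z, Rabs (Tval s - Tval t - IZR k) < eps).

Definition TT : GrpConv := {|
  gc_car := Tcar;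
  gc_zero := rho 0;
  gc_add := fun s t => rho (Tval s + Tval t);
  gc_opp := fun s => rho (- Tval s);
  gc_conv := T_conv
|}.

Definition Tplus (t : Tcar) : Prop :=
  exists r : R, -(1/4) <= r <= 1/4 /\ rho r = t.

Definition quasi_convex (L : GrpConv) (A : L -> Prop) : Prop :=
  forall x : L, ~ A x ->
    exists phi : L -> TT, Gamma L TT phi /\
      (forall a, A a -> Tplus (phi a)) /\ ~ Tplus (phi x).

Definition nbhd {X : Type} (opn : (X -> Prop) -> Prop) (x : X) (U : X -> Prop) : Prop :=
  exists V, opn V /\ V x /\ (forall y, V y -> U y).

Definition locally_quasi_convex (L : GrpConv) (opn : (L -> Prop) -> Prop) : Prop :=
  forall U, nbhd opn (gc_zero L) U ->
    exists W, nbhd opn (gc_zero L) W /\ quasi_convex L W /\ (forall y, W y -> U y).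

Definition g_barrelled (G : GrpConv) : Prop :=
  forall M : (G -> TT) -> Prop, compact_s G TT M -> equicontinuous G TT M.

From Stdlib Require Import Reals Lra Lia ZArith ClassicalEpsilon ProofIrrelevance Classical.
Open Scope R_scope.

(** Fix a zero neighbourhood W of L and let W° be its polar: the homomorphisms
    chi : L -> T with chi(W) contained in T_+.  The argument has three parts.
    - W° is equicontinuous at 0: if the multiples v, 2v, ..., nv stay in W then
      chi(v) is within 1/(4n) of an integer for every chi in W°.  Hence polar
      elements are continuous, and evaluation is jointly continuous on W°.
    - For M compact in Gamma_s(G,L), the set W°∘M = {chi∘f | chi in W°, f in M}
      is compact in Gamma_s(G,T): T is compact, and W° is closed under pointwise
      limits of ultrafilters.
    - By g-barrelledness W°∘M is equicontinuous.  If W is quasi-convex, a point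
      f(x) outside W is separated by some phi in W° with phi(f(x)) outside T_+,
      so equicontinuity of W°∘M gives f(A) inside W for a suitable A -> 0.
    The file develops the arithmetic of T, basic filter and topological group
    facts, the three parts above, and finally the theorem. *)

Ltac rabs := unfold Rabs in *; repeat match goal with
  | |- context [Rcase_abs ?x] => destruct (Rcase_abs x)
  | H : context [Rcase_abs ?x] |- _ => destruct (Rcase_abs x) end; try lra.

(** * Arithmetic of the circle group *)

Definition close_mod1 (a b e : R) : Prop := exists k : Z, Rabs (a - b - IZR k) < e.

Lemma Tval_range (t : Tcar) : 0 <= Tval t < 1.
Proof. exact (proj2_sig t). Qed.

Lemma Tval_rho (r : R) : exists z : Z, Tval (rho r) = r + IZR z.
Proof. exists (- Int_part r)%Z. unfold Tval, rho, frac_part; simpl. rewrite opp_IZR; ring. Qed.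

Lemma Tval_inj (s t : Tcar) : Tval s = Tval t -> s = t.
Proof.
  destruct s as [s Hs], t as [t Ht]; unfold Tval; simpl; intros ->.
  f_equal; apply proof_irrelevance.
Qed.

Lemma rho_Tval_shift (t : Tcar) (k : Z) : rho (Tval t + IZR k) = t.
Proof.
  apply Tval_inj. unfold rho, Tval at 1; simpl. unfold frac_part, Int_part.
  pose proof (Tval_range t).
  assert (E : (k + 1)%Z = up (Tval t + IZR k)).
  { apply tech_up; rewrite plus_IZR; simpl; lra. }
  rewrite <- E, minus_IZR, plus_IZR. simpl. unfold Tval. ring.
Qed.

Lemma Tval_rho0 : Tval (rho 0) = 0.
Proof.
  destruct (Tval_rho 0) as [z Hz]. pose proof (Tval_range (rho 0)).
  assert (z = 0%Z) as ->.
  { assert (-1 < IZR z < 1) as [H1 H2] by lra.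
    apply lt_IZR in H1; apply lt_IZR in H2; lia. }
  lra.
Qed.

Lemma close_trans a b c e1 e2 :
  close_mod1 a b e1 -> close_mod1 b c e2 -> close_mod1 a c (e1 + e2).
Proof. intros [k1 H1] [k2 H2]. exists (k1 + k2)%Z. rewrite plus_IZR. rabs. Qed.

Lemma close_sym a b e : close_mod1 a b e -> close_mod1 b a e.
Proof. intros [k H]. exists (- k)%Z. rewrite opp_IZR. rabs. Qed.

Lemma close_add a a' b b' e1 e2 (z z' : Z) :
  close_mod1 a a' e1 -> close_mod1 b b' e2 ->
  close_mod1 (a + b + IZR z) (a' + b' + IZR z') (e1 + e2).
Proof.
  intros [k1 H1] [k2 H2]. exists (k1 + k2 + z - z')%Z.
  rewrite minus_IZR, !plus_IZR. rabs.
Qed.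

Lemma close_eq u v :
  0 <= u < 1 -> 0 <= v < 1 -> (forall e, e > 0 -> close_mod1 u v e) -> u = v.
Proof.
  intros Hu Hv H. apply NNPP; intro Hne.
  assert (Hd : 0 < Rmin (Rabs (u - v)) (1 - Rabs (u - v))).
  { apply Rmin_glb_lt; rabs. }
  destruct (H _ Hd) as [k Hk].
  pose proof (Rmin_l (Rabs (u - v)) (1 - Rabs (u - v))).
  pose proof (Rmin_r (Rabs (u - v)) (1 - Rabs (u - v))).
  destruct (Z.lt_total k 0) as [Hk0 | [Hk0 | Hk0]].
  - assert (IZR k <= -1) by (apply IZR_le; lia). rabs.
  - subst k. simpl in Hk. rabs.
  - assert (1 <= IZR k) by (apply IZR_le; lia). rabs.
Qed.

Lemma near_integer_closed b :
  (forall e, e > 0 -> exists z : Z, Rabs (b - IZR z) <= 1/4 + e) ->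
  exists z : Z, Rabs (b - IZR z) <= 1/4.
Proof.
  intros H. apply NNPP; intro Hn.
  assert (Hall : forall z : Z, Rabs (b - IZR z) > 1/4).
  { intro z. apply Rnot_le_lt. intro Hz. apply Hn. exists z; exact Hz. }
  pose proof (archimed b) as [A1 A2].
  pose proof (Hall (up b - 1)%Z) as H1. pose proof (Hall (up b)) as H2.
  rewrite minus_IZR in H1. simpl in H1.
  set (d := Rmin (Rabs (b - (IZR (up b) - 1)) - 1/4) (Rabs (b - IZR (up b)) - 1/4)).
  assert (Hd : 0 < d) by (apply Rmin_glb_lt; lra).
  pose proof (Rmin_l (Rabs (b - (IZR (up b) - 1)) - 1/4) (Rabs (b - IZR (up b)) - 1/4)).
  pose proof (Rmin_r (Rabs (b - (IZR (up b) - 1)) - 1/4) (Rabs (b - IZR (up b)) - 1/4)).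
  destruct (H (d / 2) ltac:(lra)) as [z Hz].
  unfold d in *.
  assert (Q1 : IZR (up b - 2) < IZR z) by (rewrite minus_IZR; simpl; rabs).
  assert (Q2 : IZR z < IZR (up b + 1)) by (rewrite plus_IZR; simpl; rabs).
  apply lt_IZR in Q1; apply lt_IZR in Q2.
  assert (z = (up b - 1)%Z \/ z = up b) as [-> | ->] by lia.
  - rewrite minus_IZR in Hz; simpl in Hz. lra.
  - lra.
Qed.

Lemma Tplus_iff (t : Tcar) : Tplus t <-> exists z : Z, Rabs (Tval t - IZR z) <= 1/4.
Proof.
  split.
  - intros [r [Hr <-]]. destruct (Tval_rho r) as [z Hz]. exists z. rewrite Hz.
    replace (r + IZR z - IZR z) with r by ring. rabs.
  - intros [z Hz]. exists (Tval t - IZR z). split; [rabs|].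
    replace (Tval t - IZR z) with (Tval t + IZR (- z)) by (rewrite opp_IZR; ring).
    apply rho_Tval_shift.
Qed.

(** If x + ... + x (k+1 times) is within 1/4 of Z for all k <= n, then x is
    within 1/(4(n+1)) of Z: this is why polars of small sets are small. *)
Lemma multiples_near_integers (n : nat) (r : R) :
  (forall k, (k < S n)%nat -> exists z : Z, Rabs (INR (S k) * r - IZR z) <= 1/4) ->
  exists z : Z, 4 * INR (S n) * Rabs (r - IZR z) <= 1.
Proof.
  induction n as [|n IH]; intros H.
  - destruct (H 0%nat ltac:(lia)) as [z Hz]. exists z. simpl in *. rabs.
  - destruct IH as [z Hz]. { intros k Hk. apply H. lia. }
    destruct (H (S n) ltac:(lia)) as [z2 Hz2].
    set (a := INR (S n)) in *.
    assert (Ha : 1 <= a) by (unfold a; rewrite S_INR; pose proof (pos_INR n); lra).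
    rewrite (S_INR (S n)) in Hz2 |- *. fold a in Hz2 |- *.
    set (s := r - IZR z) in *.
    replace r with (s + IZR z) in Hz2 by (unfold s; ring).
    set (m := (z2 - Z.of_nat (S (S n)) * z)%Z).
    replace ((a + 1) * (s + IZR z) - IZR z2) with ((a + 1) * s - IZR m) in Hz2
      by (unfold m; rewrite minus_IZR, mult_IZR, <- INR_IZR_INZ, S_INR; fold a; ring).
    assert (Hs : (a + 1) * Rabs s <= 1/2).
    { assert (2 * a * Rabs s <= 1/2) by nra. pose proof (Rabs_pos s). nra. }
    assert (Hm : m = 0%Z).
    { assert (Rabs ((a + 1) * s) <= 1/2)
        by (rewrite Rabs_mult, (Rabs_right (a + 1)) by lra; lra).
      assert (-1 < IZR m < 1) as [H1 H2] by rabs.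
      apply lt_IZR in H1; apply lt_IZR in H2; lia. }
    rewrite Hm in Hz2. simpl in Hz2.
    exists z. fold s.
    rewrite Rminus_0_r, Rabs_mult, (Rabs_right (a + 1)) in Hz2 by lra. nra.
Qed.

Lemma fil_up {X : Type} (F : (X -> Prop) -> Prop) (A C : X -> Prop) :
  is_filter F -> F A -> (forall x, A x -> C x) -> F C.
Proof. intros [_ [Hup _]] HA H. exact (Hup _ _ HA H). Qed.

Lemma fil_mp {X : Type} (F : (X -> Prop) -> Prop) (A B C : X -> Prop) :
  is_filter F -> F A -> F B -> (forall x, A x -> B x -> C x) -> F C.
Proof.
  intros HF HA HB H. apply (fil_up F _ _ HF (proj2 (proj2 HF) _ _ HA HB)).
  intros x [? ?]; auto.
Qed.

Lemma image_filter {X Y : Type} (f : X -> Y) F : is_filter F -> is_filter (filter_image f F).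
Proof.
  intros [H1 [H2 H3]]; unfold filter_image; repeat split.
  - exact H1.
  - intros A B HA HAB. apply (H2 _ _ HA). intros x; apply HAB.
  - intros A B HA HB. exact (H3 _ _ HA HB).
Qed.

Lemma image_ultra {X Y : Type} (f : X -> Y) F :
  is_ultrafilter F -> is_ultrafilter (filter_image f F).
Proof.
  intros [Hf [Hp Hu]]. split; [apply image_filter; auto|]. split.
  - exact Hp.
  - intros A. apply (Hu (fun a => A (f a))).
Qed.

Lemma ultra_nonempty {X : Type} (F : (X -> Prop) -> Prop) A :
  is_ultrafilter F -> F A -> exists x, A x.
Proof.
  intros [Hf [Hp _]] HA. apply NNPP; intro Hn. apply Hp.
  apply (fil_up F A); auto. intros x Hx; apply Hn; eauto.
Qed.

Lemma uniform_image_filter {X Y : Type} (F : (X -> Prop) -> Prop) (M : (X -> Y) -> Prop) :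
  is_filter F ->
  is_filter (fun S : Y -> Prop => exists A, F A /\ forall f x, M f -> A x -> S (f x)).
Proof.
  intros [F1 [F2 F3]]. repeat split.
  - exists (fun _ => True); split; auto.
  - intros A B [C [HC1 HC2]] HAB. exists C; split; auto.
  - intros A B [C [HC1 HC2]] [D [HD1 HD2]]. exists (fun x => C x /\ D x).
    split; auto. intros f x Hf [Hx1 Hx2]; split; auto.
Qed.

Lemma choose_fun {A B : Type} (P : A -> B -> Prop) :
  (forall a, exists b, P a b) -> exists f : A -> B, forall a, P a (f a).
Proof.
  intros H. exists (fun a => proj1_sig (constructive_indefinite_description _ (H a))).
  intros a. exact (proj2_sig (constructive_indefinite_description _ (H a))).
Qed.

(** * Convergence in T *)

(** T is compact: every ultrafilter converges (to the supremum of the r such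
    that [r <= Tval s] eventually). *)
Lemma T_ultra_converges (U : (Tcar -> Prop) -> Prop) : is_ultrafilter U -> exists t, T_conv U t.
Proof.
  intros HU. pose proof HU as [Hf [Hp Hu]].
  set (E := fun r => U (fun s => r <= Tval s)).
  assert (Hb : bound E).
  { exists 1. intros r Hr. destruct (Rle_dec r 1) as [?|Hn]; auto. exfalso. apply Hp.
    apply (fil_up U _ _ Hf Hr). intros s Hs. pose proof (Tval_range s). lra. }
  assert (He : exists r, E r).
  { exists 0. apply (fil_up U (fun _ => True)); [auto | apply Hf |].
    intros s _. apply Tval_range. }
  destruct (completeness E Hb He) as [c [Hc1 Hc2]].
  exists (rho c). split; [exact Hf|]. intros eps Heps.
  destruct (Tval_rho c) as [z Hz].
  assert (H1 : exists r, E r /\ r > c - eps).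
  { apply NNPP; intro Hn. assert (c <= c - eps); [|lra]. apply Hc2. intros r Hr.
    destruct (Rle_dec r (c - eps)) as [?|Hr2]; auto.
    exfalso. apply Hn. exists r; split; auto; lra. }
  destruct H1 as [r [Hr Hr2]].
  assert (H2 : ~ E (c + eps/2)) by (intro H; pose proof (Hc1 _ H); lra).
  destruct (Hu (fun s => c + eps/2 <= Tval s)) as [H3|H3]; [contradiction|].
  apply (fil_mp U _ _ _ Hf Hr H3). intros s Hs1 Hs2. exists (- z)%Z. rewrite Hz, opp_IZR.
  apply Rnot_le_lt in Hs2. rabs.
Qed.

Lemma T_pointwise_limit {I X : Type} (U : (I -> Prop) -> Prop) (chi : I -> X -> TT) :
  is_ultrafilter U ->
  exists chi0 : X -> TT, forall y, T_conv (filter_image (fun i => chi i y) U) (chi0 y).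
Proof.
  intros HU. apply (choose_fun (fun y t => T_conv (filter_image (fun i => chi i y) U) t)).
  intros y. apply T_ultra_converges, image_ultra, HU.
Qed.

Lemma T_conv_eventually_eq {I : Type} (U : (I -> Prop) -> Prop) (a b : I -> TT) (t : TT) :
  is_filter U -> U (fun i => a i = b i) ->
  T_conv (filter_image a U) t -> T_conv (filter_image b U) t.
Proof.
  intros HU Heq [_ Ha]. split; [apply image_filter, HU|].
  intros eps Heps. apply (fil_mp U _ _ _ HU Heq (Ha eps Heps)). intros i <-; auto.
Qed.

Lemma hom_T_add (L : GrpConv) (chi : L -> TT) : is_hom L TT chi ->
  forall x y, exists z : Z, Tval (chi (gc_add L x y)) = Tval (chi x) + Tval (chi y) + IZR z.
Proof. intros Hh x y. rewrite Hh. apply Tval_rho. Qed.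

Section GroupLaws.
Variable G : GrpConv.
Hypothesis HG : is_abgroup G.

Lemma ab_add0r x : gc_add G x (gc_zero G) = x.
Proof. destruct HG as [_ [C [Z _]]]. rewrite C. apply Z. Qed.

Lemma ab_subK z y : gc_add G (gc_sub G z y) y = z.
Proof. destruct HG as [A [_ [_ I]]]. unfold gc_sub. rewrite <- A, I. apply ab_add0r. Qed.

Lemma ab_subv y : gc_sub G y y = gc_zero G.
Proof. destruct HG as [_ [C [_ I]]]. unfold gc_sub. rewrite C. apply I. Qed.

Lemma ab_oppK d : gc_opp G (gc_opp G d) = d.
Proof.
  destruct HG as [A [_ [Z I]]].
  rewrite <- (ab_add0r (gc_opp G (gc_opp G d))), <- (I d), A, I. apply Z.
Qed.

Lemma ab_sub0sub a d : gc_sub G a (gc_sub G (gc_zero G) d) = gc_add G a d.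
Proof. destruct HG as [_ [_ [Z _]]]. unfold gc_sub. rewrite Z, ab_oppK. reflexivity. Qed.
End GroupLaws.

(** * Topological groups *)

Section TopGroup.
Variable L : GrpConv.
Variable opn : (L -> Prop) -> Prop.
Hypothesis HL : is_top_group L opn.

Lemma nbhd_filter : is_filter (nbhd opn (gc_zero L)).
Proof.
  destruct HL as [_ [[T1 [_ T3]] _]]. repeat split.
  - exists (fun _ => True); repeat split; auto.
  - intros A B [O [HO [HO0 HOA]]] HAB. exists O; repeat split; auto.
  - intros A B [O [HO [HO0 HOA]]] [P [HP [HP0 HPB]]]. exists (fun x => O x /\ P x).
    repeat split; auto; apply HOA || apply HPB; tauto.
Qed.

Lemma conv_nbhd F x : gc_conv L F x -> forall U, nbhd opn x U -> F U.
Proof.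
  intros Hc U [O [HO [HOx HOU]]]. destruct HL as [[_ [[Hf _] _]] [_ Hiff]].
  apply (fil_up F O); [exact (Hf _ _ Hc) | | exact HOU].
  exact (proj1 (Hiff F x (Hf _ _ Hc)) Hc O HO HOx).
Qed.

Lemma nbhd_conv_zero : gc_conv L (nbhd opn (gc_zero L)) (gc_zero L).
Proof.
  destruct HL as [_ [_ Hiff]]. apply (proj2 (Hiff _ _ nbhd_filter)).
  intros U HU HU0. exists U; auto.
Qed.

Lemma nbhd_sum W : nbhd opn (gc_zero L) W ->
  exists A D, nbhd opn (gc_zero L) A /\ nbhd opn (gc_zero L) D /\
    forall a d, A a -> D d -> W (gc_add L a d).
Proof.
  intros HW. destruct HL as [[HA [[_ [Hpt _]] HS]] _].
  pose proof (HS _ _ _ _ nbhd_conv_zero (HS _ _ _ _ (Hpt (gc_zero L)) nbhd_conv_zero)) as Hc.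
  rewrite (ab_sub0sub L HA), (ab_add0r L HA) in Hc.
  destruct (conv_nbhd _ _ Hc W HW) as [A [B [HA' [[C [D [HC0 [HD' HCD]]]] HAB]]]].
  exists A, D. split; [exact HA'|split; [exact HD'|]]. intros a d Ha Hd.
  rewrite <- (ab_sub0sub L HA). apply HAB; auto.
Qed.

Lemma conv_translate H y V :
  gc_conv L H y -> nbhd opn (gc_zero L) V -> H (fun z => V (gc_sub L z y)).
Proof.
  intros Hc HV. destruct HL as [[HA [[Hf [Hpt _]] HS]] _].
  pose proof (HS _ _ _ _ Hc (Hpt y)) as H1. rewrite (ab_subv L HA) in H1.
  destruct (conv_nbhd _ _ H1 V HV) as [A [B [HA' [HB' HAB]]]].
  apply (fil_up H A); [exact (Hf _ _ Hc) | exact HA' |].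
  intros z Hz. apply (HAB z y Hz HB').
Qed.

(** [mulS k v] is the multiple (k+1)·v. *)
Fixpoint mulS (k : nat) (v : L) : L :=
  match k with O => v | S k' => gc_add L v (mulS k' v) end.

Lemma nbhd_multiples n W : nbhd opn (gc_zero L) W ->
  exists V, nbhd opn (gc_zero L) V /\
    forall v, V v -> forall k, (k < S n)%nat -> W (mulS k v).
Proof.
  revert W. induction n as [|n IH]; intros W HW.
  - exists W; split; auto. intros v Hv k Hk. destruct k; [exact Hv | lia].
  - destruct (nbhd_sum W HW) as [A [D [HA [HD HAD]]]].
    destruct (IH D HD) as [V' [HV' HV'D]].
    exists (fun v => V' v /\ A v /\ W v). split.
    + apply (fil_mp _ V' (fun v => A v /\ W v) _ nbhd_filter); auto.
      apply (fil_mp _ A W _ nbhd_filter); auto.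
    + intros v [H1 [H2 H3]] k Hk. destruct k as [|k]; [exact H3|]. simpl.
      apply HAD; auto. apply HV'D; auto. lia.
Qed.

Lemma hom_mulS (chi : L -> TT) : is_hom L TT chi -> forall k v,
  exists z : Z, Tval (chi (mulS k v)) = INR (S k) * Tval (chi v) + IZR z.
Proof.
  intros Hh k v. induction k as [|k [z Hz]].
  - exists 0%Z. simpl. ring.
  - destruct (hom_T_add L chi Hh v (mulS k v)) as [z' Hz']. simpl mulS.
    rewrite Hz', Hz. exists (z + z')%Z. rewrite plus_IZR, (S_INR (S k)). ring.
Qed.

(** * The polar of a zero neighbourhood *)

Variable W : L -> Prop.
Hypothesis HW : nbhd opn (gc_zero L) W.

(** W° : homomorphisms L -> T (not assumed continuous) mapping W into T_+. *)
Definition polar (chi : L -> TT) : Prop :=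
  is_hom L TT chi /\ forall w, W w -> Tplus (chi w).

Lemma polar_small eps : eps > 0 -> exists V, nbhd opn (gc_zero L) V /\
  forall chi, polar chi -> forall v, V v -> close_mod1 (Tval (chi v)) 0 eps.
Proof.
  intros Heps. destruct (archimed_cor1 eps Heps) as [N [HN HN0]].
  destruct N as [|n]; [lia|].
  destruct (nbhd_multiples n W HW) as [V [HV HVW]].
  exists V; split; auto. intros chi [Hh HK] v Hv.
  assert (Hmult : forall k, (k < S n)%nat ->
            exists z : Z, Rabs (INR (S k) * Tval (chi v) - IZR z) <= 1/4).
  { intros k Hk. destruct (proj1 (Tplus_iff _) (HK _ (HVW v Hv k Hk))) as [z Hz].
    destruct (hom_mulS chi Hh k v) as [z' Hz']. rewrite Hz' in Hz.
    exists (z - z')%Z. rewrite minus_IZR.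
    replace (INR (S k) * Tval (chi v) - (IZR z - IZR z'))
      with (INR (S k) * Tval (chi v) + IZR z' - IZR z) by ring. exact Hz. }
  destruct (multiples_near_integers n _ Hmult) as [z Hz]. exists z. rewrite Rminus_0_r.
  assert (Hp : 0 < INR (S n)) by (apply lt_0_INR; lia).
  assert (Rabs (Tval (chi v) - IZR z) <= / INR (S n) / 4).
  { apply (Rmult_le_reg_l (4 * INR (S n))); [lra|].
    replace (4 * INR (S n) * (/ INR (S n) / 4)) with 1 by (field; lra). exact Hz. }
  assert (0 < / INR (S n)) by (apply Rinv_0_lt_compat; lra). lra.
Qed.

Lemma polar_limit_eval (I : Type) (U : (I -> Prop) -> Prop)
    (f : I -> L) (chi : I -> L -> TT) (y : L) (t : TT) :
  is_filter U -> U (fun i => polar (chi i)) ->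
  gc_conv L (filter_image f U) y ->
  T_conv (filter_image (fun i => chi i y) U) t ->
  T_conv (filter_image (fun i => chi i (f i)) U) t.
Proof.
  intros HU Hpol Hf [_ Hchi]. split; [apply image_filter, HU|].
  intros eps Heps. assert (He2 : eps / 2 > 0) by lra.
  destruct (polar_small _ He2) as [V [HV HVsmall]].
  pose proof (conv_translate _ _ _ Hf HV) as Hdiff.
  apply (fil_mp U _ _ _ HU Hpol (fil_mp U _ _ _ HU Hdiff (Hchi _ He2) (fun _ a b => conj a b))).
  intros i Hp [Hv Hc].
  destruct HL as [[HA _] _].
  rewrite <- (ab_subK L HA (f i) y).
  destruct (hom_T_add L _ (proj1 Hp) (gc_sub L (f i) y) y) as [z Hz]. rewrite Hz.
  replace (Tval t) with (0 + Tval t + IZR 0) by (simpl; ring).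
  replace eps with (eps / 2 + eps / 2) by field.
  exact (close_add _ _ _ _ _ _ z 0 (HVsmall _ Hp _ Hv) Hc).
Qed.

Lemma polar_continuous chi : polar chi -> continuous L TT chi.
Proof.
  intros Hchi F y Hc. pose proof (proj1 (proj1 (proj2 (proj1 HL))) _ _ Hc) as HF.
  apply (polar_limit_eval L F (fun z => z) (fun _ => chi) y (chi y) HF).
  - apply (fil_up F (fun _ => True)); [exact HF | apply HF | auto].
  - exact Hc.
  - split; [apply image_filter, HF|]. intros eps Heps.
    apply (fil_up F (fun _ => True)); [exact HF | apply HF |].
    intros _ _. exists 0%Z. simpl. rabs.
Qed.

Lemma polar_closed (I : Type) (U : (I -> Prop) -> Prop) (chi : I -> L -> TT) (chi0 : L -> TT) :
  is_ultrafilter U -> U (fun i => polar (chi i)) ->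
  (forall y, T_conv (filter_image (fun i => chi i y) U) (chi0 y)) ->
  polar chi0.
Proof.
  intros HU Hpol Hlim. pose proof (proj1 HU) as HUf.
  assert (Hnear : forall y e, e > 0 ->
            U (fun i => polar (chi i) /\ close_mod1 (Tval (chi i y)) (Tval (chi0 y)) e)).
  { intros y e He. apply (fil_mp U _ _ _ HUf Hpol (proj2 (Hlim y) e He)). auto. }
  split.
  - intros a b. apply Tval_inj, close_eq; try apply Tval_range. intros e He.
    assert (He3 : e / 3 > 0) by lra.
    assert (Hall : U (fun i => polar (chi i) /\
              close_mod1 (Tval (chi i (gc_add L a b))) (Tval (chi0 (gc_add L a b))) (e / 3) /\
              close_mod1 (Tval (chi i a)) (Tval (chi0 a)) (e / 3) /\
              close_mod1 (Tval (chi i b)) (Tval (chi0 b)) (e / 3))).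
    { apply (fil_mp U _ _ _ HUf (Hnear (gc_add L a b) _ He3)
               (fil_mp U _ _ _ HUf (Hnear a _ He3) (Hnear b _ He3) (fun _ x y => conj x y))).
      intros i [Hp Hab] [[_ Ha] [_ Hb]]. auto. }
    destruct (ultra_nonempty _ _ HU Hall) as [i [[Hh _] [Hab [Ha Hb]]]].
    destruct (hom_T_add L _ Hh a b) as [z1 Hz1]. rewrite Hz1 in Hab.
    destruct (Tval_rho (Tval (chi0 a) + Tval (chi0 b))) as [z2 Hz2].
    change (close_mod1 (Tval (chi0 (gc_add L a b))) (Tval (rho (Tval (chi0 a) + Tval (chi0 b)))) e).
    rewrite Hz2. replace e with (e / 3 + (e / 3 + e / 3)) by field.
    exact (close_trans _ _ _ _ _ (close_sym _ _ _ Hab) (close_add _ _ _ _ _ _ z1 z2 Ha Hb)).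
  - intros w Hw. apply Tplus_iff, near_integer_closed. intros e He.
    destruct (ultra_nonempty _ _ HU (Hnear w e He)) as [i [[_ HK] [k Hk]]].
    destruct (proj1 (Tplus_iff _) (HK w Hw)) as [z Hz]. exists (z - k)%Z.
    rewrite minus_IZR. rabs.
Qed.

Definition polar_compose (G : GrpConv) (M : (G -> L) -> Prop) (g : G -> TT) : Prop :=
  exists f chi, M f /\ polar chi /\ g = (fun x => chi (f x)).

Lemma polar_compose_factor (G : GrpConv) (M : (G -> L) -> Prop) :
  exists sel : (G -> TT) -> (G -> L) * (L -> TT), forall g, polar_compose G M g ->
    M (fst (sel g)) /\ polar (snd (sel g)) /\ g = (fun x => snd (sel g) (fst (sel g) x)).
Proof.
  apply (choose_fun (fun g p => polar_compose G M g ->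
    M (fst p) /\ polar (snd p) /\ g = (fun x => snd p (fst p x)))).
  intros g. destruct (classic (polar_compose G M g)) as
    [[f [chi [Hf [Hchi Hg]]]] | Hn].
  - exists (f, chi). auto.
  - exists (fun _ => gc_zero L, fun _ => rho 0). intro H; contradiction.
Qed.

Lemma polar_compose_compact (G : GrpConv) (M : (G -> L) -> Prop) :
  compact_s G L M -> compact_s G TT (polar_compose G M).
Proof.
  intros [HMG HMc]. split.
  { intros g [f [chi [Hf [Hchi ->]]]]. destruct (HMG f Hf) as [Hfh Hfc]. split.
    - intros x y. rewrite Hfh. apply (proj1 Hchi).
    - intros F x Hc. exact (polar_continuous chi Hchi _ _ (Hfc F x Hc)). }
  intros Phi HPhi HN. pose proof (proj1 HPhi) as HPf.
  destruct (polar_compose_factor G M) as [sel Hsel].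
  assert (Hfac : Phi (fun g => M (fst (sel g)) /\ polar (snd (sel g)) /\
                                 g = (fun x => snd (sel g) (fst (sel g) x))))
    by exact (fil_up Phi _ _ HPf HN Hsel).
  destruct (HMc (filter_image (fun g => fst (sel g)) Phi) (image_ultra _ _ HPhi))
    as [f0 [Hf0 Hf0lim]].
  { apply (fil_up Phi _ _ HPf Hfac). intros g [Hf _]; exact Hf. }
  destruct (T_pointwise_limit Phi (fun g => snd (sel g)) HPhi) as [chi0 Hchi0lim].
  assert (Hpol : Phi (fun g => polar (snd (sel g))))
    by (apply (fil_up Phi _ _ HPf Hfac); intros g [_ [Hp _]]; exact Hp).
  exists (fun x => chi0 (f0 x)). split.
  { exists f0, chi0. split; [exact Hf0 | split; [|reflexivity]].
    exact (polar_closed _ Phi _ chi0 HPhi Hpol Hchi0lim). }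
  intros x.
  apply (T_conv_eventually_eq Phi (fun g => snd (sel g) (fst (sel g) x))); [exact HPf | |].
  - apply (fil_up Phi _ _ HPf Hfac). intros g [_ [_ Hg]].
    exact (eq_sym (f_equal (fun h => h x) Hg)).
  - exact (polar_limit_eval _ Phi (fun g => fst (sel g) x) (fun g => snd (sel g))
             (f0 x) (chi0 (f0 x)) HPf Hpol (Hf0lim x) (Hchi0lim (f0 x))).
Qed.

Lemma polar_equicontinuous_bound (G : GrpConv) (M : (G -> L) -> Prop) F :
  quasi_convex L W -> equicontinuous G TT (polar_compose G M) ->
  gc_conv G F (gc_zero G) -> exists A, F A /\ forall f x, M f -> A x -> W (f x).
Proof.
  intros Hqc Heq HF. destruct (Heq F HF) as [_ Hsmall].
  destruct (Hsmall (1/4) ltac:(lra)) as [A [HA HAsmall]].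
  exists A. split; [exact HA|]. intros f x Hf Hx. apply NNPP; intro Hn.
  destruct (Hqc _ Hn) as [phi [[Hph _] [HpW Hpx]]]. apply Hpx, Tplus_iff.
  assert (Hphi : polar_compose G M (fun x => phi (f x))).
  { exists f, phi. repeat split; auto. }
  destruct (HAsmall _ x Hphi Hx) as [k Hk].
  change (Rabs (Tval (phi (f x)) - Tval (rho 0) - IZR k) < 1/4) in Hk. rewrite Tval_rho0 in Hk.
  exists k. rabs.
Qed.
End TopGroup.

(** Given a zero neighbourhood U of L, pick a quasi-convex zero neighbourhood
    W inside U; g-barrelledness makes the compact set W°∘M equicontinuous,
    which bounds M by W on a set of F. *)

Theorem theorem2p15 (G L : GrpConv) (opnL : (L -> Prop) -> Prop) :
  is_conv_group G -> g_barrelled G ->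
  is_top_group L opnL -> hausdorff opnL -> locally_quasi_convex L opnL ->
  forall M : (G -> L) -> Prop, compact_s G L M -> equicontinuous G L M.
Proof.
  intros HG Hgb HL _ Hlqc M HM F HF.
  pose proof (proj1 (proj1 (proj2 HG)) _ _ HF) as HFf.
  (* In L, convergence to 0 means being finer than the zero neighbourhoods. *)
  apply (proj2 (proj2 (proj2 HL) _ _ (uniform_image_filter F M HFf))).
  intros U HU HU0.
  destruct (Hlqc U (ex_intro _ U (conj HU (conj HU0 (fun y H => H))))) as [W [HW [Hqc HWU]]].
  pose proof (Hgb _ (polar_compose_compact L opnL HL W HW G M HM)) as Heq.
  destruct (polar_equicontinuous_bound L W G M F Hqc Heq HF) as [A [HA HAW]].
  exists A. split; [exact HA|]. intros f x Hf Hx. exact (HWU _ (HAW f x Hf Hx)).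
Qed.
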